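(* Consider the system of ordinary differential equations \[ \dot u=r_{1}u(1-u)-a_{12}uv-a_{13}uw,\qquad \dot v=r_{2}v(1-v)+a_{21}uv,\qquad \dot w=-\mu w+a_{31}uw, \] with all parameters $r_1,r_2,\mu,a_{12},a_{13},a_{21},a_{31}$ positive. Then every solution with nonnegative initial data is bounded for $t\ge0$.
   Context: Solutions starting in the nonnegative orthant remain nonnegative. *)

From Stdlib Require Import Reals.
From Coquelicot Require Import Coquelicot.
Open Scope R_scope.

Definition is_solution (r1 r2 mu a12 a13 a21 a31 : R) (u v w : R -> R) : Prop :=
  forall t, 0 <= t ->
    is_derive u t (r1 * u t * (1 - u t) - a12 * u t * v t - a13 * u t * w t) /\
    is_derive v t (r2 * v t * (1 - v t) + a21 * u t * v t) /\
    is_derive w t (- mu * w t + a31 * u t * w t).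

(* Each equation has the form x' = x g with g continuous, so x e^(c t), with c
   below -g on [0, T], cannot leave [0, +oo): the orthant is invariant.  On it,
   u' <= r1 u (1 - u) bounds u by max (u 0) 1; then v' <= r2 v (K - v) with K
   depending on that bound bounds v; finally, in z = a31 u + a13 w the
   predation terms a13 u w cancel, so z' <= C - mu z bounds z and hence w.
   Every comparison rests on one barrier principle: a function starting below B
   whose derivative is negative wherever it exceeds B stays below B, because at
   a maximum point on [0, T] the left difference quotients are nonnegative. *)

From Stdlib Require Import Reals Lra.
From Coquelicot Require Import Coquelicot.
Open Scope R_scope.

Lemma is_derive_ge0_at_left_max (f : R -> R) (a x l : R) :
  a < x -> is_derive f x l -> (forall y, a <= y <= x -> f y <= f x) -> 0 <= l.
Proof.
  intros Hax Hd Hmax.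
  apply Rnot_lt_le; intro Hl.
  apply is_derive_Reals in Hd.
  destruct (Hd (- l / 2) ltac:(lra)) as [[d Hd_pos] Hquot]; simpl in Hquot.
  set (h := - Rmin (d / 2) (x - a)).
  assert (Hmin_d := Rmin_l (d / 2) (x - a)).
  assert (Hmin_xa := Rmin_r (d / 2) (x - a)).
  assert (Hmin_pos : 0 < Rmin (d / 2) (x - a)) by (apply Rmin_pos; lra).
  assert (Hh : h < 0) by (unfold h; lra).
  specialize (Hquot h ltac:(lra) ltac:(rewrite Rabs_left; unfold h; lra)).
  assert (Hdrop : f (x + h) <= f x) by (apply Hmax; unfold h; lra).
  assert (Hquot_ge0 : 0 <= (f (x + h) - f x) / h).
  { unfold Rdiv. assert (/ h < 0) by (apply Rinv_lt_0_compat; lra). nra. }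
  apply Rabs_def2 in Hquot. lra.
Qed.

Lemma le_of_is_derive_neg_above (x dx : R -> R) (B T : R) : 0 <= T ->
  (forall t, 0 <= t <= T -> is_derive x t (dx t)) -> x 0 <= B ->
  (forall t, 0 < t <= T -> B < x t -> dx t < 0) -> x T <= B.
Proof.
  intros HT Hd H0 Hneg.
  destruct (continuity_ab_maj x 0 T HT) as [m [Hmax Hm]].
  { intros t Ht. apply continuity_pt_filterlim, (@ex_derive_continuous R_AbsRing R_NormedModule).
    eexists; exact (Hd t Ht). }
  apply Rnot_lt_le; intro HxT.
  assert (HxT_le := Hmax T (conj HT (Rle_refl T))).
  assert (Hm_pos : 0 < m) by (destruct (Req_dec m 0) as [->|]; lra).
  assert (Hdx_neg := Hneg m (conj Hm_pos (proj2 Hm)) ltac:(lra)).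
  assert (Hdx_ge0 : 0 <= dx m).
  { apply (is_derive_ge0_at_left_max x 0 m); auto.
    intros y Hy. apply Hmax. lra. }
  lra.
Qed.

Lemma nonneg_of_is_derive_mul (x f : R -> R) : 0 <= x 0 ->
  (forall t, 0 <= t -> is_derive x t (x t * f t)) ->
  (forall t, 0 <= t -> continuous f t) ->
  forall T, 0 <= T -> 0 <= x T.
Proof.
  intros Hx0 Hd Hc T HT.
  destruct (continuity_ab_maj f 0 T HT) as [m [Hmax _]].
  { intros t Ht. apply continuity_pt_filterlim, Hc. lra. }
  set (c := - (f m + 1)).
  set (y := fun s => - (x s * exp (c * s))).
  assert (Hy : forall t, 0 <= t -> is_derive y t (y t * (f t + c))).
  { intros t Ht.
    replace (y t * (f t + c)) with (- (x t * f t * exp (c * t) + x t * (c * exp (c * t))))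
      by (unfold y; ring).
    apply (@is_derive_opp R_AbsRing R_NormedModule (fun s => x s * exp (c * s))).
    apply (is_derive_mult x (fun s => exp (c * s))); [now apply Hd | | exact Rmult_comm].
    auto_derive; [trivial | ring]. }
  assert (HyT : y T <= 0).
  { apply (le_of_is_derive_neg_above y (fun t => y t * (f t + c))); auto.
    - intros t Ht. apply Hy. lra.
    - unfold y. rewrite Rmult_0_r, exp_0. lra.
    - intros t Ht Hyt. assert (f t <= f m) by (apply Hmax; lra).
      unfold c. nra. }
  assert (0 < exp (c * T)) by apply exp_pos.
  unfold y in HyT. nra.
Qed.

Lemma le_of_is_derive_logistic (x dx : R -> R) (r K : R) : 0 < r ->
  (forall t, 0 <= t -> 0 <= x t) ->
  (forall t, 0 <= t -> is_derive x t (dx t)) ->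
  (forall t, 0 <= t -> dx t <= r * x t * (K - x t)) ->
  forall T, 0 <= T -> x T <= Rmax (x 0) K.
Proof.
  intros Hr Hx Hd Hle T HT.
  apply (le_of_is_derive_neg_above x dx); auto.
  - intros t Ht. apply Hd. lra.
  - apply Rmax_l.
  - intros t Ht Habove.
    assert (x 0 <= Rmax (x 0) K) by apply Rmax_l.
    assert (K <= Rmax (x 0) K) by apply Rmax_r.
    assert (0 <= x 0) by (apply Hx; lra).
    assert (dx t <= r * x t * (K - x t)) by (apply Hle; lra).
    assert (0 < r * x t) by (apply Rmult_lt_0_compat; lra).
    nra.
Qed.

Lemma le_of_is_derive_affine (x dx : R -> R) (mu K : R) : 0 < mu ->
  (forall t, 0 <= t -> is_derive x t (dx t)) ->
  (forall t, 0 <= t -> dx t <= mu * (K - x t)) ->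
  forall T, 0 <= T -> x T <= Rmax (x 0) K.
Proof.
  intros Hmu Hd Hle T HT.
  apply (le_of_is_derive_neg_above x dx); auto.
  - intros t Ht. apply Hd. lra.
  - apply Rmax_l.
  - intros t Ht Habove.
    assert (K <= Rmax (x 0) K) by apply Rmax_r.
    assert (dx t <= mu * (K - x t)) by (apply Hle; lra).
    nra.
Qed.

Section Solution.

Variables r1 r2 mu a12 a13 a21 a31 : R.
Variables u v w : R -> R.
Hypotheses (Hr1 : 0 < r1) (Hr2 : 0 < r2) (Hmu : 0 < mu).
Hypotheses (Ha12 : 0 < a12) (Ha13 : 0 < a13) (Ha21 : 0 < a21) (Ha31 : 0 < a31).
Hypothesis Hsol : is_solution r1 r2 mu a12 a13 a21 a31 u v w.
Hypotheses (Hu0 : 0 <= u 0) (Hv0 : 0 <= v 0) (Hw0 : 0 <= w 0).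

Lemma solution_continuous_combination (p q1 q2 q3 t : R) : 0 <= t ->
  continuous (fun s => p + q1 * u s + q2 * v s + q3 * w s) t.
Proof.
  intro Ht. apply (@ex_derive_continuous R_AbsRing R_NormedModule).
  destruct (Hsol t Ht) as [Du [Dv Dw]].
  auto_derive. repeat split; eexists; eassumption.
Qed.

Lemma u_ge0 t : 0 <= t -> 0 <= u t.
Proof.
  apply (nonneg_of_is_derive_mul u (fun s => r1 + (- r1) * u s + (- a12) * v s + (- a13) * w s)).
  - exact Hu0.
  - intros s Hs. destruct (Hsol s Hs) as [Du _].
    replace (u s * _) with (r1 * u s * (1 - u s) - a12 * u s * v s - a13 * u s * w s)
      by ring.
    exact Du.
  - intros s Hs. now apply solution_continuous_combination.
Qed.

Lemma v_ge0 t : 0 <= t -> 0 <= v t.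
Proof.
  apply (nonneg_of_is_derive_mul v (fun s => r2 + a21 * u s + (- r2) * v s + 0 * w s)).
  - exact Hv0.
  - intros s Hs. destruct (Hsol s Hs) as [_ [Dv _]].
    replace (v s * _) with (r2 * v s * (1 - v s) + a21 * u s * v s) by ring.
    exact Dv.
  - intros s Hs. now apply solution_continuous_combination.
Qed.

Lemma w_ge0 t : 0 <= t -> 0 <= w t.
Proof.
  apply (nonneg_of_is_derive_mul w (fun s => - mu + a31 * u s + 0 * v s + 0 * w s)).
  - exact Hw0.
  - intros s Hs. destruct (Hsol s Hs) as [_ [_ Dw]].
    replace (w s * _) with (- mu * w s + a31 * u s * w s) by ring.
    exact Dw.
  - intros s Hs. now apply solution_continuous_combination.
Qed.

Lemma u_nonneg_bounded : exists M, forall t, 0 <= t -> 0 <= u t <= M.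
Proof.
  exists (Rmax (u 0) 1). intros t Ht. split; [now apply u_ge0|].
  apply (le_of_is_derive_logistic u
    (fun s => r1 * u s * (1 - u s) - a12 * u s * v s - a13 * u s * w s) r1); auto.
  - exact u_ge0.
  - intros s Hs. apply Hsol, Hs.
  - intros s Hs.
    assert (0 <= u s * v s) by (apply Rmult_le_pos; [apply u_ge0 | apply v_ge0]; lra).
    assert (0 <= u s * w s) by (apply Rmult_le_pos; [apply u_ge0 | apply w_ge0]; lra).
    nra.
Qed.

Lemma v_nonneg_bounded : exists M, forall t, 0 <= t -> 0 <= v t <= M.
Proof.
  destruct u_nonneg_bounded as [Mu Hu].
  exists (Rmax (v 0) (1 + a21 * Mu / r2)). intros t Ht. split; [now apply v_ge0|].
  apply (le_of_is_derive_logistic v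
    (fun s => r2 * v s * (1 - v s) + a21 * u s * v s) r2); auto.
  - exact v_ge0.
  - intros s Hs. apply Hsol, Hs.
  - intros s Hs.
    replace (r2 * v s * (1 + a21 * Mu / r2 - v s))
      with (r2 * v s * (1 - v s) + a21 * Mu * v s) by (field; lra).
    assert (0 <= a21 * (Mu - u s) * v s).
    { apply Rmult_le_pos; [apply Rmult_le_pos |]; [lra | | now apply v_ge0].
      assert (u s <= Mu) by apply Hu, Hs. lra. }
    lra.
Qed.

Lemma w_nonneg_bounded : exists M, forall t, 0 <= t -> 0 <= w t <= M.
Proof.
  destruct u_nonneg_bounded as [Mu Hu].
  set (z := fun s => a31 * u s + a13 * w s).
  set (Mz := Rmax (z 0) (a31 * (r1 + mu) * Mu / mu)).
  assert (Hz : forall t, 0 <= t -> z t <= Mz).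
  { apply (le_of_is_derive_affine z
      (fun s => a31 * (r1 + mu) * u s - a31 * r1 * (u s * u s) - a31 * a12 * (u s * v s)
                - mu * z s) mu); auto.
    - intros s Hs. destruct (Hsol s Hs) as [Du [_ Dw]].
      replace (_ - mu * z s) with
        (a31 * (r1 * u s * (1 - u s) - a12 * u s * v s - a13 * u s * w s)
         + a13 * (- mu * w s + a31 * u s * w s)) by (unfold z; ring).
      apply (is_derive_plus (K := R_AbsRing) (V := R_NormedModule)
        (fun s => a31 * u s) (fun s => a13 * w s)); now apply is_derive_scal.
    - intros s Hs.
      replace (mu * (a31 * (r1 + mu) * Mu / mu - z s))
        with (a31 * (r1 + mu) * Mu - mu * z s) by (field; lra).
      assert (0 <= u s <= Mu) by apply Hu, Hs.
      assert (0 <= u s * v s) by (apply Rmult_le_pos; [lra | now apply v_ge0]).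
      assert (a31 * (r1 + mu) * u s <= a31 * (r1 + mu) * Mu)
        by (apply Rmult_le_compat_l; nra).
      assert (0 <= a31 * r1 * (u s * u s)) by (apply Rmult_le_pos; nra).
      assert (0 <= a31 * a12 * (u s * v s)) by (apply Rmult_le_pos; nra).
      lra. }
  exists (Mz / a13). intros t Ht.
  assert (0 <= w t) by now apply w_ge0.
  assert (0 <= u t) by now apply u_ge0.
  split; [lra|].
  apply (Rmult_le_reg_l a13); [lra|].
  replace (a13 * (Mz / a13)) with Mz by (field; lra).
  assert (z t <= Mz) by now apply Hz.
  unfold z in *. nra.
Qed.

End Solution.

Theorem lemma1 (r1 r2 mu a12 a13 a21 a31 : R) (u v w : R -> R) :
  0 < r1 -> 0 < r2 -> 0 < mu -> 0 < a12 -> 0 < a13 -> 0 < a21 -> 0 < a31 ->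
  is_solution r1 r2 mu a12 a13 a21 a31 u v w ->
  0 <= u 0 -> 0 <= v 0 -> 0 <= w 0 ->
  exists M : R, forall t, 0 <= t ->
    Rabs (u t) <= M /\ Rabs (v t) <= M /\ Rabs (w t) <= M.
Proof.
  intros.
  destruct (u_nonneg_bounded r1 r2 mu a12 a13 a21 a31 u v w) as [Mu Hu]; auto.
  destruct (v_nonneg_bounded r1 r2 mu a12 a13 a21 a31 u v w) as [Mv Hv]; auto.
  destruct (w_nonneg_bounded r1 r2 mu a12 a13 a21 a31 u v w) as [Mw Hw]; auto.
  exists (Mu + Mv + Mw). intros t Ht.
  pose proof (Hu 0 (Rle_refl 0)). pose proof (Hv 0 (Rle_refl 0)).
  pose proof (Hw 0 (Rle_refl 0)).
  destruct (Hu t Ht), (Hv t Ht), (Hw t Ht).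
  rewrite !Rabs_pos_eq by lra. lra.
Qed.
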